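(* Let $k\ge 1$ and $m\ge 0$ be integers, set $A=\lfloor m/k\rfloor$, and let $Q$ be an even polynomial with real coefficients of degree at most $2m$. Then there exist real numbers $C_{a,b,j,l}$, indexed by $0\le a\le A$, $0\le b\le k-1$, $0\le j\le k$, $l\in\{0,1\}$, such that $$Q(x)=\sum_{a=0}^{A}\sum_{b=0}^{k-1}\sum_{j=0}^{k}\sum_{l=0}^{1}C_{a,b,j,l}\,T_a(x)^{2j}\,T_b(x)^{2l}\qquad\text{for all }x,$$ and $$\sum_{a,b,j,l}|C_{a,b,j,l}|\le 3k\,(A+1)(A+2)\,(1+\sqrt2)^{2k}\,\|Q\|_{[-1,1]}.$$ In particular, when $2m=d-k$, this $\ell^1$-norm is $O\big(\|Q\|_{[-1,1]}\,d^2(1+\sqrt2)^{2k}/k\big)$, and each polynomial $T_a(x)^{2j}T_b(x)^{2l}$ equals $\prod_{s=1}^k|\mathcal{R}_s(x)|^2$ on $\mathbb{R}$ for real polynomials $\mathcal{R}_s\in\{1,T_a,T_b,T_aT_b\}$ of definite parity, degree at most $A+k-1$, and $\|\mathcal{R}_s\|_{[-1,1]}\le 1$.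
   Context: $T_m$ denotes the Chebyshev polynomial of the first kind, i.e. the polynomial with $T_m(\cos\theta)=\cos(m\theta)$ for all real $\theta$. For a function $f$ on $[-1,1]$, $\|f\|_{[-1,1]}:=\max_{x\in[-1,1]}|f(x)|$. *)

From HB Require Import structures.
From mathcomp Require Import all_boot all_order all_algebra.
From mathcomp Require Import all_classical all_reals all_analysis.
Set Implicit Arguments. Unset Strict Implicit. Unset Printing Implicit Defensive.
Import Order.TTheory GRing.Theory Num.Theory.
Local Open Scope ring_scope.
Local Open Scope classical_set_scope.

Definition supnorm11 {R : realType} (p : {poly R}) : R :=
  sup [set `|p.[x]| | x in `[(-1 : R), 1]%classic].

Definition is_even_polyn {R : realType} (p : {poly R}) : Prop :=
  p \Po (- 'X) = p.
Definition is_odd_polyn {R : realType} (p : {poly R}) : Prop :=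
  p \Po (- 'X) = - p.

Definition is_chebyshev_family {R : realType} (T : nat -> {poly R}) : Prop :=
  forall (n : nat) (t : R), (T n).[cos t] = cos (n%:R * t).

From HB Require Import structures.
From mathcomp Require Import all_boot all_order all_algebra.
From mathcomp Require Import all_classical all_reals all_analysis.
From mathcomp Require Import ring lra zify.
Import Order.TTheory GRing.Theory Num.Theory.
Set Implicit Arguments. Unset Strict Implicit. Unset Printing Implicit Defensive.
Local Open Scope ring_scope.

(* Expand [Q = sum_(n <= m) c_n T_(2n)].  The [T_p], [p <= 2m], are orthogonal on the
   [2m+1] Chebyshev nodes, so sampling there gives [sum c_n^2 <= 2 |Q|^2] and hence, by
   Cauchy-Schwarz, [sum |c_n| <= sqrt (2(m+1)) |Q|].  Each [T_(2n)] with [n = ak + b],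
   [0 <= b < k], is a combination of the [T_a^(2j) T_b^(2l)] of l1-cost
   [3 (2a+1) (1+sqrt 2)^(2k)]: for [b = 0] write [T_(2ka) = T_(2k) o T_a] and use that
   the coefficients of [T_(2k)] have l1-norm at most [(1+sqrt 2)^(2k)]; for [b > 0] peel
   off one block of [k] with [T_(2(ak+b)) = 2 T_(2ka) T_(2b) - T_(2((a-1)k + (k-b)))].
   The factorisation part is explicit: [T_a^(2j) T_b^(2l)] is the product of [j] copies
   of [T_a^2], one of them multiplied by [T_b^2] when [l = 1]. *)

Lemma nat_ind2 (P : nat -> Prop) : P 0%N -> P 1%N ->
  (forall n, P n -> P n.+1 -> P n.+2) -> forall n, P n.
Proof.
move=> h0 h1 hS n; suff: P n /\ P n.+1 by case.
by elim: n => [|n [IH1 IH2]]; split=> //; apply: hS.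
Qed.

Section Chebyshev.
Variable R : realType.

Fixpoint cheb_pair (n : nat) : {poly R} * {poly R} :=
  if n is n'.+1 then let: (p, q) := cheb_pair n' in (q, 2%:R *: ('X * q) - p)
  else (1, 'X).
Definition cheb n := (cheb_pair n).1.

Lemma cheb0 : cheb 0 = 1. Proof. by []. Qed.
Lemma cheb1 : cheb 1 = 'X. Proof. by []. Qed.
Lemma chebSS n : cheb n.+2 = 2%:R *: ('X * cheb n.+1) - cheb n.
Proof. by rewrite /cheb /=; case: (cheb_pair n). Qed.

Lemma cheb_cos n t : (cheb n).[cos t] = cos (n%:R * t).
Proof.
elim/nat_ind2: n t => [t|t|n IH1 IH2 t].
- by rewrite cheb0 hornerC mul0r cos0.
- by rewrite cheb1 hornerX mul1r.
rewrite chebSS hornerD hornerN hornerZ hornerM hornerX IH1 IH2.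
have -> : n.+2%:R * t = n.+1%:R * t + t by rewrite -[n.+2]addn1 natrD mulrDl mul1r.
have -> : n%:R * t = n.+1%:R * t - t by rewrite -[n.+1]addn1 natrD mulrDl mul1r addrK.
by rewrite (cosD (n.+1%:R * t) t) (cosB (n.+1%:R * t) t); ring.
Qed.

(* [x |-> acos x] turns the hypothesis into equality on [-1, 1], an infinite set. *)
Lemma eq_poly_cos (p q : {poly R}) : (forall t, p.[cos t] = q.[cos t]) -> p = q.
Proof.
move=> h; apply/eqP; rewrite -subr_eq0; apply/eqP.
have r0 x : -1 <= x <= 1 -> (p - q).[x] = 0.
  by move=> hx; rewrite hornerD hornerN -(acosK (x := x)) ?in_itv // h subrr.
apply: (@roots_geq_poly_eq0 _ _ [seq (i.+1)%:R^-1 | i <- iota 0 (size (p - q))]).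
- apply/allP => _ /mapP [i _ ->]; rewrite /root r0 //.
  rewrite (le_trans (lerN10 _)) ?invr_ge0 ?ler0n //=.
  by rewrite invf_le1 ?ltr0n ?ler1n.
- rewrite map_inj_uniq ?iota_uniq // => i j /eqP.
  by rewrite (inj_eq invr_inj) eqr_nat => /eqP [].
- by rewrite size_map size_iota.
Qed.

Lemma size_cheb n : size (cheb n) = n.+1.
Proof.
elim/nat_ind2: n => [|| n IH1 IH2]; first by rewrite cheb0 size_poly1.
  by rewrite cheb1 size_polyX.
have size_lead : size (2%:R *: ('X * cheb n.+1)) = n.+3.
  by rewrite size_scale ?pnatr_eq0 // mulrC size_mulX -?size_poly_eq0 IH2.
by rewrite chebSS size_polyDl size_lead // size_polyN IH1.
Qed.

Lemma cheb_hornerN n x : (cheb n).[- x] = (-1) ^+ n * (cheb n).[x].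
Proof.
elim/nat_ind2: n => [|| n IH1 IH2].
- by rewrite cheb0 !hornerC expr0 mul1r.
- by rewrite cheb1 !hornerX expr1 mulN1r.
by rewrite chebSS !(hornerD, hornerN, hornerZ, hornerM, hornerX) IH1 IH2 !exprS; ring.
Qed.

Definition coef_l1 (N : nat) (p : {poly R}) := \sum_(i < N) `|p`_i|.

Lemma coef_l1_mulX N p : coef_l1 N ('X * p) <= coef_l1 N p.
Proof.
case: N => [|N]; first by rewrite /coef_l1 !big_ord0.
rewrite /coef_l1 big_ord_recl coefXM normr0 add0r [leRHS]big_ord_recr /=.
by rewrite -[leLHS]addr0 lerD // ler_sum // => i _; rewrite coefXM.
Qed.

Lemma coef_l1D N p q : coef_l1 N (p + q) <= coef_l1 N p + coef_l1 N q.
Proof. by rewrite -big_split ler_sum // => i _; rewrite coefD ler_normD. Qed.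

Lemma coef_l1N N p : coef_l1 N (- p) = coef_l1 N p.
Proof. by apply: eq_bigr => i _; rewrite coefN normrN. Qed.

Lemma coef_l1Z N c p : coef_l1 N (c *: p) = `|c| * coef_l1 N p.
Proof. by rewrite /coef_l1 mulr_sumr; apply: eq_bigr => i _; rewrite coefZ normrM. Qed.

Definition silver : R := 1 + Num.sqrt 2.

Lemma silver_ge1 : 1 <= silver.
Proof. by rewrite lerDl sqrtr_ge0. Qed.

Lemma silver_sqr : silver ^+ 2 = 2 * silver + 1.
Proof. by rewrite /silver sqrrD sqr_sqrtr ?ler0n //; ring. Qed.

(* The recurrence gives [|T_(n+2)|_1 <= 2 |T_(n+1)|_1 + |T_n|_1], whose growth rate is
   the silver ratio. *)
Lemma coef_l1_cheb N n : coef_l1 N (cheb n) <= silver ^+ n.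
Proof.
elim/nat_ind2: n => [|| n IH1 IH2].
- rewrite cheb0 expr0 /coef_l1; case: N => [|N]; first by rewrite big_ord0.
  by rewrite big_ord_recl coef1 normr1 big1 ?addr0 // => i _; rewrite coef1 normr0.
- rewrite cheb1 expr1 (le_trans _ silver_ge1) // /coef_l1.
  case: N => [|[|N]]; rewrite ?big_ord0 // !big_ord_recl !coefX /= normr0 ?normr1 add0r ?big_ord0 //.
  by rewrite big1 ?addr0 // => i _; rewrite coefX normr0.
rewrite chebSS (le_trans (coef_l1D _ _ _)) // coef_l1N coef_l1Z.
have -> : silver ^+ n.+2 = 2 * silver ^+ n.+1 + silver ^+ n.
  by rewrite !exprS mulrA -expr2 silver_sqr; ring.
rewrite lerD // ger0_norm ?ler0n // ler_pM2l ?ltr0n //.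
exact: le_trans (coef_l1_mulX _ _) IH2.
Qed.

End Chebyshev.

Section ChebyshevFamily.
Variable R : realType.
Variable T : nat -> {poly R}.
Hypothesis hT : is_chebyshev_family T.

Lemma chebyshev_familyE n : T n = cheb R n.
Proof. by apply: eq_poly_cos => t; rewrite hT cheb_cos. Qed.

Lemma chebyshev0 : T 0 = 1. Proof. by rewrite chebyshev_familyE. Qed.

Lemma size_chebyshev n : size (T n) = n.+1.
Proof. by rewrite chebyshev_familyE size_cheb. Qed.

Lemma chebyshev_hornerN n x : (T n).[- x] = (-1) ^+ n * (T n).[x].
Proof. by rewrite chebyshev_familyE cheb_hornerN. Qed.

Lemma horner_chebyshev2 x : (T 2).[x] = 2 * x ^+ 2 - 1.
Proof.
rewrite chebyshev_familyE chebSS cheb1 cheb0.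
by rewrite hornerD hornerN hornerZ hornerM hornerX hornerC expr2.
Qed.

Lemma chebyshevM n m : T (n * m) = T n \Po T m.
Proof. by apply: eq_poly_cos => t; rewrite horner_comp !hT natrM mulrA. Qed.

Lemma chebyshev_product p q x : (q <= p)%N ->
  2 * (T p).[x] * (T q).[x] = (T (p + q)).[x] + (T (p - q)).[x].
Proof.
move=> hqp; rewrite -mulrA -hornerM -hornerD -[2]/(2%:R) -hornerZ; congr _.[x].
apply: eq_poly_cos => t; rewrite hornerD hornerZ hornerM !hT natrD natrB //.
rewrite (mulrDl p%:R q%:R t) (mulrBl t p%:R q%:R) (cosD (p%:R * t)) (cosB (p%:R * t)); ring.
Qed.

Lemma chebyshev_bounded n x : -1 <= x <= 1 -> `|(T n).[x]| <= 1.
Proof.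
move=> hx; rewrite -(acosK (x := x)) ?in_itv // hT.
by rewrite ler_norml cos_le1 cos_geN1.
Qed.

End ChebyshevFamily.

Section SupNorm.
Variable R : realType.

Lemma horner_le_coef_l1 (p : {poly R}) x :
  -1 <= x <= 1 -> `|p.[x]| <= coef_l1 (size p) p.
Proof.
move=> hx; rewrite horner_coef (le_trans (ler_norm_sum _ _ _)) // ler_sum // => i _.
rewrite normrM -[leRHS]mulr1 ler_wpM2l // normrX exprn_ile1 //.
by rewrite ler_norml.
Qed.

Lemma supnorm11_ub (p : {poly R}) x : -1 <= x <= 1 -> `|p.[x]| <= supnorm11 p.
Proof.
move=> hx; apply: ub_le_sup; last by exists x => //=; rewrite in_itv.
exists (coef_l1 (size p) p) => _ [y hy <-]; apply: horner_le_coef_l1.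
by move: hy; rewrite /= in_itv.
Qed.

Lemma supnorm11_ge0 (p : {poly R}) : 0 <= supnorm11 p.
Proof. by apply: le_trans (@supnorm11_ub p 0 _); rewrite ?lerN10 ?ler01. Qed.

Lemma supnorm11_le (p : {poly R}) c :
  (forall x, -1 <= x <= 1 -> `|p.[x]| <= c) -> supnorm11 p <= c.
Proof.
move=> h; apply: ge_sup; first by exists `|p.[0]|, 0; rewrite //= in_itv /= lerN10 ler01.
by move=> _ [y hy <-]; apply: h; move: hy; rewrite /= in_itv.
Qed.

End SupNorm.

Section Factorization.
Variable R : realType.
Variable T : nat -> {poly R}.
Hypothesis hT : is_chebyshev_family T.

Definition has_parity (p : {poly R}) := is_even_polyn p \/ is_odd_polyn p.

Lemma has_parity1 : has_parity 1.
Proof. by left; rewrite /is_even_polyn -polyC1 comp_polyC. Qed.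

Lemma has_parityM p q : has_parity p -> has_parity q -> has_parity (p * q).
Proof.
rewrite /has_parity /is_even_polyn /is_odd_polyn comp_polyM.
by case=> ->; case=> ->; rewrite ?mulrN ?mulNr ?opprK; auto.
Qed.

Lemma has_parity_chebyshev n : has_parity (T n).
Proof.
have compN : T n \Po (- 'X) = (-1) ^+ n *: T n.
  apply: eq_poly_cos => t.
  by rewrite horner_comp hornerN hornerX hornerZ (chebyshev_hornerN hT).
rewrite /has_parity /is_even_polyn /is_odd_polyn compN -signr_odd.
by case: (odd n); [right; rewrite expr1 scaleN1r | left; rewrite expr0 scale1r].
Qed.

Lemma prod_ord_if_lt (k j : nat) (y : R) :
  \prod_(s < k) (if (s < j)%N then y else 1) = y ^+ minn j k.
Proof.
elim: k => [|k IH]; first by rewrite big_ord0 minn0 expr0.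
rewrite big_ord_recr /= IH; case: (ltnP k j) => h.
  by rewrite (minn_idPr h) exprSr.
by rewrite mulr1 (minn_idPl (leqW h)).
Qed.

Lemma prod_ord_if_eq (k p : nat) (c : bool) (y : R) : (p < k)%N ->
  \prod_(s < k) (if c && (s == p :> nat) then y else 1) = if c then y else 1.
Proof.
move=> hp; case: c; last by rewrite big1.
rewrite (bigD1 (Ordinal hp)) //= eqxx big1 ?mulr1 // => i hi.
by case: eqP => // e; move: hi; rewrite -val_eqE /= e eqxx.
Qed.

(* [R_s = T_a] for [s < j], times [T_b] in one slot [s0] if [l = 1]. *)
Lemma chebyshev_power_factorization (A k a b j l : nat) :
  (a <= A)%N -> (b < k)%N -> (j <= k)%N -> (l <= 1)%N ->
  exists Rs : 'I_k -> {poly R},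
    (forall x : R, (T a).[x] ^+ (2 * j) * (T b).[x] ^+ (2 * l)
                   = \prod_(s < k) `|(Rs s).[x]| ^+ 2) /\
    (forall s : 'I_k,
       Rs s \in [:: 1; T a; T b; T a * T b] /\
       (is_even_polyn (Rs s) \/ is_odd_polyn (Rs s)) /\
       (size (Rs s) <= A + k)%N /\
       supnorm11 (Rs s) <= 1).
Proof.
move=> ha hb hj hl.
pose s0 := if (j < k)%N then j else 0%N.
have hs0 : (s0 < k)%N by rewrite /s0; case: ifP => // _; apply: leq_ltn_trans hb.
pose Ra s : {poly R} := if (s < j)%N then T a else 1.
pose Rb s : {poly R} := if (l == 1%N) && (s == s0) then T b else 1.
have normK (p : {poly R}) x : `|p.[x]| ^+ 2 = p.[x] ^+ 2 by rewrite real_normK ?num_real.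
have bounded (p : {poly R}) n x : p \in [:: 1; T n] -> -1 <= x <= 1 -> `|p.[x]| <= 1.
  by rewrite !inE => /orP [] /eqP -> hx; rewrite ?hornerC ?normr1 ?chebyshev_bounded.
exists (fun s => Ra s * Rb s); split.
  move=> x; under eq_bigr => s _ do rewrite hornerM normrM exprMn !normK /Ra /Rb.
  rewrite big_split /=.
  under eq_bigr => s _ do rewrite (fun_if (fun p => p.[x] ^+ 2)) hornerC expr1n.
  under [X in _ = _ * X]eq_bigr => s _ do rewrite (fun_if (fun p => p.[x] ^+ 2)) hornerC expr1n.
  rewrite prod_ord_if_lt prod_ord_if_eq // (minn_idPl hj) -exprM mulnC.
  by case: (l) hl => [|[|]] //= _; rewrite ?muln0 ?expr0 ?muln1.
move=> s; rewrite /Ra /Rb; split; last split; last split.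
- by case: ifP => _; case: ifP => _; rewrite ?mul1r ?mulr1 !inE eqxx ?orbT.
- apply: (@has_parityM (if (s < j)%N then T a else 1));
    by case: ifP => _; [exact: has_parity_chebyshev | exact: has_parity1].
- rewrite (leq_trans (size_polyMleq _ _)) // -subn1 leq_subLR add1n -addSn leq_add //.
    by case: ifP; rewrite ?size_poly1 // (size_chebyshev hT).
  by case: ifP => _; rewrite ?size_poly1 ?(size_chebyshev hT) // (leq_ltn_trans _ hb).
- apply: supnorm11_le => x hx; rewrite hornerM normrM mulr_ile1 //.
  + by case: ifP => _; apply: (bounded _ a); rewrite ?inE ?eqxx ?orbT.
  + by case: ifP => _; apply: (bounded _ b); rewrite ?inE ?eqxx ?orbT.
Qed.

End Factorization.

Section Representation.
Variable R : realType.
Variable T : nat -> {poly R}.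
Variables A k : nat.

Definition sum4 (F : 'I_A.+1 -> 'I_k -> 'I_k.+1 -> 'I_2 -> R) :=
  \sum_(a < A.+1) \sum_(b < k) \sum_(j < k.+1) \sum_(l < 2) F a b j l.

Lemma sum4D F G : sum4 (fun a b j l => F a b j l + G a b j l) = sum4 F + sum4 G.
Proof.
rewrite -big_split; apply: eq_bigr => a _; rewrite -big_split; apply: eq_bigr => b _.
by rewrite -big_split; apply: eq_bigr => j _; rewrite -big_split.
Qed.

Lemma sum4Z c F : sum4 (fun a b j l => c * F a b j l) = c * sum4 F.
Proof.
rewrite /sum4 mulr_sumr; apply: eq_bigr => a _; rewrite mulr_sumr; apply: eq_bigr => b _.
by rewrite mulr_sumr; apply: eq_bigr => j _; rewrite mulr_sumr.
Qed.

Lemma ler_sum4 F G : (forall a b j l, F a b j l <= G a b j l) -> sum4 F <= sum4 G.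
Proof.
move=> h; apply: ler_sum => a _; apply: ler_sum => b _.
by apply: ler_sum => j _; apply: ler_sum => l _.
Qed.

Lemma sum4_eq0 F : (forall a b j l, F a b j l = 0) -> sum4 F = 0.
Proof.
by move=> h; rewrite /sum4 big1 // => a _; rewrite big1 // => b _; rewrite big1 // => j _;
  rewrite big1.
Qed.

Lemma sum_delta n (i0 : 'I_n) (F : 'I_n -> R) :
  \sum_(i < n) (if i == i0 then F i else 0) = F i0.
Proof. by rewrite -big_mkcond big_pred1_eq. Qed.

Lemma sum4_delta a0 b0 j0 l0 F :
  sum4 (fun a b j l => if [&& a == a0, b == b0, j == j0 & l == l0] then F a b j l else 0)
  = F a0 b0 j0 l0.
Proof.
rewrite /sum4 -[RHS](sum_delta a0 (fun a => F a b0 j0 l0)); apply: eq_bigr => a _.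
case: eqP => [->|_] /=; last by rewrite big1 // => b _; rewrite big1 // => j _; rewrite big1.
rewrite -[RHS](sum_delta b0 (fun b => F a0 b j0 l0)); apply: eq_bigr => b _.
case: eqP => [->|_] /=; last by rewrite big1 // => j _; rewrite big1.
rewrite -[RHS](sum_delta j0 (fun j => F a0 b0 j l0)); apply: eq_bigr => j _.
by case: eqP => [->|_] /=; [exact: sum_delta | rewrite big1].
Qed.

Definition has_rep (f : R -> R) (r : R) :=
  exists C : 'I_A.+1 -> 'I_k -> 'I_k.+1 -> 'I_2 -> R,
    (forall x, f x = sum4 (fun a b j l => C a b j l * (T a).[x] ^+ (2 * j) * (T b).[x] ^+ (2 * l)))
    /\ sum4 (fun a b j l => `|C a b j l|) <= r.

Lemma has_rep_weaken f g r r' :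
  has_rep g r -> (forall x, f x = g x) -> r <= r' -> has_rep f r'.
Proof.
by move=> [C [hC hr]] e le_r; exists C; split => [x|]; [rewrite e hC | apply: le_trans le_r].
Qed.

Lemma has_rep0 : has_rep (fun _ => 0) 0.
Proof.
exists (fun _ _ _ _ => 0); split => [x|].
  by rewrite sum4_eq0 // => *; rewrite !mul0r.
by rewrite sum4_eq0 // => *; rewrite normr0.
Qed.

Lemma has_repD f g r s : has_rep f r -> has_rep g s -> has_rep (fun x => f x + g x) (r + s).
Proof.
move=> [C [hC hr]] [D [hD hs]]; exists (fun a b j l => C a b j l + D a b j l); split.
  by move=> x; rewrite hC hD -sum4D; congr sum4; do 4! apply: funext => ?; rewrite !mulrDl.
by rewrite (le_trans _ (lerD hr hs)) // -sum4D ler_sum4 // => *; apply: ler_normD.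
Qed.

Lemma has_repZ c f r : has_rep f r -> has_rep (fun x => c * f x) (`|c| * r).
Proof.
move=> [C [hC hr]]; exists (fun a b j l => c * C a b j l); split.
  by move=> x; rewrite hC -sum4Z; congr sum4; do 4! apply: funext => ?; rewrite !mulrA.
have -> : sum4 (fun a b j l => `|c * C a b j l|) = `|c| * sum4 (fun a b j l => `|C a b j l|).
  by rewrite -sum4Z; congr sum4; do 4! apply: funext => ?; rewrite normrM.
exact: ler_wpM2l.
Qed.

Lemma has_rep_sum N (F : nat -> R -> R) (r : nat -> R) :
  (forall i, (i < N)%N -> has_rep (F i) (r i)) ->
  has_rep (fun x => \sum_(i < N) F i x) (\sum_(i < N) r i).
Proof.
elim: N => [|N IH] h.
  by apply: has_rep_weaken has_rep0 _ _ => [x|]; rewrite big_ord0.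
apply: has_rep_weaken (has_repD (IH _) (h _ _)) _ _ => //.
- by move=> i hi; apply/h/ltnW.
- by move=> x; rewrite big_ord_recr.
- by rewrite big_ord_recr.
Qed.

Lemma has_rep_basis (a : 'I_A.+1) (b : 'I_k) (j : 'I_k.+1) (l : 'I_2) :
  has_rep (fun x => (T a).[x] ^+ (2 * j) * (T b).[x] ^+ (2 * l)) 1.
Proof.
exists (fun a' b' j' l' => if [&& a' == a, b' == b, j' == j & l' == l] then 1 else 0); split.
  move=> x; rewrite -(sum4_delta a b j l (fun a b j l => (T a).[x] ^+ (2 * j) * (T b).[x] ^+ (2 * l))).
  by congr sum4; do 4! apply: funext => ?; case: ifP; rewrite ?mul1r ?mul0r.
rewrite -[leRHS](sum4_delta a b j l (fun _ _ _ _ => 1)).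
by rewrite ler_sum4 // => *; case: ifP; rewrite ?normr1 ?normr0.
Qed.

End Representation.

Section EvenPolynomials.
Variable R : realType.

Lemma sum_even_ord (f : nat -> R) m :
  \sum_(p < (2 * m).+1) (if odd p then 0 else f p) = \sum_(n < m.+1) f (2 * n)%N.
Proof.
elim: m => [|m IH]; first by rewrite !big_ord_recr !big_ord0 /= muln0.
have -> : (2 * m.+1).+1 = ((2 * m).+1).+2 by rewrite mulnS.
rewrite big_ord_recr /= big_ord_recr /= IH [in RHS]big_ord_recr /=.
by rewrite mul2n odd_double /= addr0 -mul2n mulnS add2n.
Qed.

Lemma horner_even_poly (p : {poly R}) y : (forall x, p.[- x] = p.[x]) ->
  p.[y] = \sum_(i < size p) (if odd i then 0 else p`_i) * y ^+ (2 * i./2).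
Proof.
move=> hp; have -> : p.[y] = (p.[y] + p.[- y]) / 2 by rewrite hp; lra.
rewrite !horner_coef -big_split mulr_suml; apply: eq_bigr => i _ /=.
rewrite exprNn -signr_odd; have := odd_double_half i.
case: (odd i) => /= hi; first by rewrite expr1 mulN1r mulrN subrr !mul0r.
by rewrite add0n in hi; rewrite expr0 mul1r mul2n hi; lra.
Qed.

End EvenPolynomials.

Section ChebyshevRepresentation.
Variable R : realType.
Variable T : nat -> {poly R}.
Hypothesis hT : is_chebyshev_family T.
Variables A k : nat.

Local Notation has_rep := (has_rep T A k).

(* [T_(2ja) T_(2b) = T_(2j)(T_a) (2 T_b^2 - 1)], and [T_(2j)] is even with coefficient
   l1-norm at most [silver^(2j)]. *)
Lemma has_rep_chebyshev_base a j b : (a <= A)%N -> (j <= k)%N -> (b < k)%N ->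
  has_rep (fun x => (T (2 * j * a)).[x] * (T (2 * b)).[x]) (3 * silver R ^+ (2 * k)).
Proof.
move=> ha hj hb; set p := T (2 * j).
have size_p : size p = (2 * j).+1 by rewrite /p (size_chebyshev hT).
have p_even x : p.[- x] = p.[x].
  by rewrite /p (chebyshev_hornerN hT) exprM sqrrN !expr1n mul1r.
pose e i := if odd i then 0 else p`_i.
pose F i x := 2 * e i * (T a).[x] ^+ (2 * i./2) * (T b).[x] ^+ (2 * 1)
            + - e i * (T a).[x] ^+ (2 * i./2) * (T b).[x] ^+ (2 * 0).
have expand x : (T (2 * j * a)).[x] * (T (2 * b)).[x] = \sum_(i < size p) F i x.
  rewrite (chebyshevM hT) horner_comp -/p (horner_even_poly _ p_even).
  rewrite (chebyshevM hT 2 b) horner_comp (horner_chebyshev2 hT) mulr_suml.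
  by apply: eq_bigr => i _; rewrite /F /e muln0 expr0 mulr1 muln1; ring.
have rep_sum : has_rep (fun x => \sum_(i < size p) F i x) (\sum_(i < size p) 3 * `|p`_i|).
  apply: (has_rep_sum (F := F) (r := fun i => 3 * `|p`_i|)) => i; rewrite size_p ltnS => hi.
  have hi2 : (i./2 < k.+1)%N.
    rewrite ltnS (leq_trans _ hj) // -(leq_pmul2l (isT : (0 < 2)%N)) (leq_trans _ hi) //.
    by rewrite -{2}(odd_double_half i) -mul2n leq_addl.
  pose basis l := has_rep_basis T (@Ordinal A.+1 a ha) (Ordinal hb) (Ordinal hi2) l.
  apply: has_rep_weaken (has_repD (has_repZ (2 * e i) (basis (@Ordinal 2 1 isT)))
                                  (has_repZ (- e i) (basis (@Ordinal 2 0 isT)))) _ _ => [x|].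
    by rewrite /F /= !mulrA.
  rewrite !mulr1 normrN normrM ger0_norm // /e.
  by case: (odd i); rewrite ?normr0 ?mulr0 ?addr0 ?normr_ge0 //; lra.
apply: has_rep_weaken rep_sum expand _.
rewrite -mulr_sumr ler_wpM2l // (le_trans (y := silver R ^+ (2 * j))) //.
  by have := coef_l1_cheb R (size p) (2 * j); rewrite -(chebyshev_familyE hT).
by apply: ler_weXn2l; rewrite ?silver_ge1 // leq_mul2l hj orbT.
Qed.

(* [T_(2((a+1)k+b)) = 2 T_(2k(a+1)) T_(2b) - T_(2(ak+(k-b)))] peels off one block of [k]. *)
Lemma has_rep_chebyshev_block a b : (a <= A)%N -> (0 < b < k)%N ->
  has_rep (fun x => (T (2 * (a * k + b))).[x]) (3 * silver R ^+ (2 * k) * (2 * a + 1)%:R).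
Proof.
elim: a b => [|a IH] b ha /andP [b_gt0 b_lt_k].
  apply: has_rep_weaken (has_rep_chebyshev_base (j := 0) ha (leq0n k) b_lt_k) _ _.
    by move=> x; rewrite muln0 (chebyshev0 hT) hornerC mul1r mul0n add0n.
  by rewrite mulr1.
have hkb : (0 < k - b < k)%N by lia.
apply: has_rep_weaken (has_repD (has_repZ 2 (has_rep_chebyshev_base ha (leqnn k) b_lt_k))
                              (has_repZ (-1) (IH (k - b)%N (ltnW ha) hkb))) _ _ => [x|]; last first.
  by rewrite normrN normr1 ger0_norm ?ler0n // mul1r natrD natrM; lra.
have le_b : (2 * b <= 2 * k * a.+1)%N by nia.
have := chebyshev_product hT x le_b.
rewrite (_ : 2 * k * a.+1 + 2 * b = 2 * (a.+1 * k + b))%N; last by ring.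
rewrite (_ : 2 * k * a.+1 - 2 * b = 2 * (a * k + (k - b)))%N; last by nia.
by rewrite /= mulrA => ->; ring.
Qed.

(* For [k = 1] every [n] is a multiple of [k], so no block is ever peeled off. *)
Definition block_cost := if k == 1%N then 1%N else (2 * A + 1)%N.

Lemma has_rep_chebyshev_even n : (0 < k)%N -> (n %/ k <= A)%N ->
  has_rep (fun x => (T (2 * n)).[x]) (3 * silver R ^+ (2 * k) * block_cost%:R).
Proof.
move=> k_gt0 hn; have silver_ge0 := le_trans ler01 (silver_ge1 R).
have n_eq := divn_eq n k; have [n_mod0|n_mod_gt0] := posnP (n %% k).
  apply: has_rep_weaken (has_rep_chebyshev_base (b := 0) hn (leqnn k) k_gt0) _ _.
    move=> x; rewrite muln0 (chebyshev0 hT) hornerC mulr1 [in LHS]n_eq n_mod0 addn0.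
    by congr (T _).[x]; ring.
  rewrite -[leLHS]mulr1 ler_wpM2l ?mulr_ge0 ?exprn_ge0 // ler1n /block_cost.
  by case: ifP; rewrite // addn1.
have k_neq1 : k != 1%N by apply: contraTneq n_mod_gt0 => ->; rewrite modn1.
apply: has_rep_weaken (has_rep_chebyshev_block (b := n %% k) hn _) _ _.
- by rewrite n_mod_gt0 ltn_pmod.
- by move=> x; rewrite -n_eq.
- rewrite ler_wpM2l ?mulr_ge0 ?exprn_ge0 // /block_cost (negbTE k_neq1).
  by rewrite ler_nat leq_add2r leq_mul2l hn orbT.
Qed.

End ChebyshevRepresentation.

Section ChebyshevExpansion.
Variable R : realType.
Variable T : nat -> {poly R}.
Hypothesis hT : is_chebyshev_family T.

Lemma chebyshev_expansion N (p : {poly R}) : (size p <= N)%N ->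
  exists c : nat -> R, p = \sum_(i < N) c i *: T i.
Proof.
elim: N p => [|N IH] p hp.
  by exists (fun _ => 0); rewrite big_ord0; apply/eqP; rewrite -size_poly_eq0 -leqn0.
have lead_TN : (T N)`_N != 0.
  have := size_chebyshev hT N => size_TN.
  by rewrite -[N in _`_N]/(N.+1.-1) -size_TN -lead_coefE lead_coef_eq0 -size_poly_eq0 size_TN.
pose lam := p`_N / (T N)`_N.
have size_rem : (size (p - lam *: T N)%R <= N)%N.
  apply/leq_sizeP => i hi; rewrite coefB coefZ.
  case: (ltngtP i N) => [|lt_Ni|->]; first by rewrite ltnNge hi.
  - have /leq_sizeP -> := hp; last by [].
    have /leq_sizeP -> := leqnn (size (T N)); first by rewrite mulr0 subr0.
    by rewrite (size_chebyshev hT).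
  - by rewrite /lam mulfVK // subrr.
have [c hc] := IH _ size_rem.
exists (fun i => if i == N then lam else c i).
rewrite big_ord_recr /= eqxx -[p](subrK (lam *: T N)) hc; congr (_ + _).
by apply: eq_bigr => i _; rewrite (ltn_eqF (ltn_ord i)).
Qed.

Lemma horner_even_chebyshev_expansion m (Q : {poly R}) (c : nat -> R) :
  is_even_polyn Q -> (forall x, Q.[x] = \sum_(p < (2 * m).+1) c p * (T p).[x]) ->
  forall x, Q.[x] = \sum_(n < m.+1) c (2 * n)%N * (T (2 * n)).[x].
Proof.
move=> hQe hQ x; rewrite -(sum_even_ord (fun p => c p * (T p).[x])).
have -> : Q.[x] = (Q.[x] + Q.[- x]) / 2.
  by rewrite -{3}hQe horner_comp hornerN hornerX opprK; lra.
rewrite !hQ -big_split mulr_suml; apply: eq_bigr => p _ /=.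
by rewrite (chebyshev_hornerN hT) -signr_odd; case: (odd p); rewrite ?expr1 ?expr0; lra.
Qed.

End ChebyshevExpansion.

Section ChebyshevNodes.
Variable R : realType.
Variable M : nat.

Definition cheb_node (i : nat) : R := (2 * i + 1)%:R * (pi / (2 * M)%:R).

Lemma sin_natpi (s : nat) : sin (s%:R * pi) = 0 :> R.
Proof. by rewrite mulr_natl -[_ *+ s]add0r (alternatingn (@sinDpi R)) sin0 mulr0. Qed.

(* Multiply by [2 sin (s h)] with [h = pi/(2M)]: the sum telescopes to [sin (s pi) = 0]. *)
Lemma sum_cos_cheb_node (s : nat) : (0 < s < 2 * M)%N ->
  \sum_(i < M) cos (s%:R * cheb_node i) = 0.
Proof.
move=> /andP [s_gt0 s_lt]; pose h : R := pi / (2 * M)%:R.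
have M2_gt0 : (0 < 2 * M)%N by apply: leq_ltn_trans s_lt.
have sin_gt0 : 0 < sin (s%:R * h).
  apply: sin_gt0_pi; rewrite mulr_gt0 ?ltr0n ?divr_gt0 ?pi_gt0 ?ltr0n //=.
  by rewrite /h mulrA ltr_pdivrMr ?ltr0n // mulrC ltr_pM2l ?pi_gt0 // ltr_nat.
pose f i := sin (s%:R * ((2 * i)%:R * h)).
have step i : 2 * sin (s%:R * h) * cos (s%:R * cheb_node i) = f i.+1 - f i.
  rewrite /f.
  have -> : s%:R * ((2 * i.+1)%:R * h) = s%:R * cheb_node i + s%:R * h.
    by rewrite /cheb_node -/h (_ : 2 * i.+1 = 2 * i + 1 + 1)%N ?natrD; [ring | lia].
  have -> : s%:R * ((2 * i)%:R * h) = s%:R * cheb_node i - s%:R * h.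
    by rewrite /cheb_node -/h natrD; ring.
  by rewrite sinD sinB; ring.
have : 2 * sin (s%:R * h) * \sum_(i < M) cos (s%:R * cheb_node i) = 0.
  rewrite mulr_sumr (eq_bigr (fun i : 'I_M => f i.+1 - f i) (fun i _ => step i)).
  rewrite -(big_mkord xpredT (fun i => f i.+1 - f i)) telescope_sumr // /f.
  rewrite muln0 mul0r mulr0 sin0 subr0 -(sin_natpi s); congr (sin (_ * _)).
  by rewrite /h mulrCA divff ?mulr1 // pnatr_eq0 -lt0n.
by move/eqP; rewrite !mulf_eq0 pnatr_eq0 /= (gt_eqF sin_gt0) => /eqP.
Qed.

Definition node_gram (p q : nat) : R :=
  \sum_(i < M) cos (p%:R * cheb_node i) * cos (q%:R * cheb_node i).

Lemma node_gramC p q : node_gram p q = node_gram q p.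
Proof. by apply: eq_bigr => i _; rewrite mulrC. Qed.

Lemma node_gram_split p q : (q <= p)%N -> node_gram p q =
  (\sum_(i < M) cos ((p + q)%N%:R * cheb_node i)
   + \sum_(i < M) cos ((p - q)%N%:R * cheb_node i)) / 2.
Proof.
move=> hqp; rewrite -big_split mulr_suml; apply: eq_bigr => i _ /=.
rewrite natrD natrB // (mulrDl p%:R q%:R) (mulrBl (cheb_node i) p%:R q%:R).
by rewrite (cosD (p%:R * cheb_node i)) (cosB (p%:R * cheb_node i)); lra.
Qed.

Lemma node_gram_off p q : p != q -> (p < M)%N -> (q < M)%N -> node_gram p q = 0.
Proof.
wlog hqp : p q / (q <= p)%N.
  move=> W hpq hp hq; have [le_qp|/ltnW le_pq] := leqP q p; first exact: W.
  by rewrite node_gramC; apply: W; rewrite // eq_sym.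
move=> hpq hp hq; have q_lt_p : (q < p)%N by rewrite ltn_neqAle eq_sym hpq.
rewrite node_gram_split // !sum_cos_cheb_node ?addr0 ?mul0r //; apply/andP; split; lia.
Qed.

Lemma node_gram_diag p : (p < M)%N -> M%:R / 2 <= node_gram p p.
Proof.
move=> hp; rewrite node_gram_split // subnn.
have sum_cos0 : \sum_(i < M) cos (0%N%:R * cheb_node i) = M%:R.
  by rewrite (eq_bigr (fun _ => 1)) ?sumr_const ?card_ord // => i _; rewrite mul0r cos0.
have [->|p_gt0] := posnP p; first by rewrite sum_cos0; have := ler0n R M; lra.
by rewrite sum_cos_cheb_node ?add0r ?sum_cos0 //; apply/andP; split; lia.
Qed.

Lemma sum_sqr_le_cheb_nodes (c : nat -> R) :
  M%:R / 2 * \sum_(p < M) c p ^+ 2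
  <= \sum_(i < M) (\sum_(p < M) c p * cos (p%:R * cheb_node i)) ^+ 2.
Proof.
have -> : \sum_(i < M) (\sum_(p < M) c p * cos (p%:R * cheb_node i)) ^+ 2
        = \sum_(p < M) \sum_(q < M) c p * c q * node_gram p q.
  under eq_bigr => i _ do rewrite expr2 big_distrlr /=.
  rewrite exchange_big /=; apply: eq_bigr => p _.
  rewrite exchange_big /=; apply: eq_bigr => q _.
  by rewrite /node_gram mulr_sumr; apply: eq_bigr => i _; ring.
rewrite mulr_sumr; apply: ler_sum => p _.
rewrite (bigD1 p) //= big1 ?addr0 => [|q hq]; last by rewrite node_gram_off ?mulr0 // eq_sym.
by rewrite -expr2 [leRHS]mulrC ler_wpM2r ?sqr_ge0 ?node_gram_diag.
Qed.

End ChebyshevNodes.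

Lemma sqr_sum_le (R : realDomainType) N (u : nat -> R) :
  (\sum_(n < N) u n) ^+ 2 <= N%:R * \sum_(n < N) u n ^+ 2.
Proof.
have const_sum (a : R) : \sum_(j < N) a = N%:R * a.
  by rewrite sumr_const card_ord mulr_natl.
have diff_ge0 : 0 <= \sum_(i < N) \sum_(j < N) (u i - u j) ^+ 2.
  by do 2 (apply: sumr_ge0 => ? _); apply: sqr_ge0.
have diff_expand : \sum_(i < N) \sum_(j < N) (u i - u j) ^+ 2
    = \sum_(i < N) (N%:R * u i ^+ 2) + \sum_(i < N) \sum_(j < N) u j ^+ 2
      - 2 * (\sum_(i < N) \sum_(j < N) u i * u j).
  rewrite mulr_sumr -big_split -sumrB; apply: eq_bigr => i _ /=.
  rewrite -const_sum mulr_sumr -!big_split -sumrB; apply: eq_bigr => j _ /=; ring.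
move: diff_ge0; rewrite diff_expand -mulr_sumr -big_distrlr /= -expr2.
rewrite (const_sum (\sum_(j < N) u j ^+ 2)); lra.
Qed.

Lemma sum_norm_le_of_sum_sqr (R : realDomainType) N (u : nat -> R) (B W K : R) :
  0 <= B -> 0 <= W -> 0 <= K ->
  \sum_(n < N) u n ^+ 2 <= 2 * B ^+ 2 -> 2 * N%:R * W ^+ 2 <= K ^+ 2 ->
  W * \sum_(n < N) `|u n| <= K * B.
Proof.
move=> B_ge0 W_ge0 K_ge0 sum_le cost_le.
have S_ge0 : 0 <= \sum_(n < N) `|u n| by apply: sumr_ge0.
rewrite -ler_sqr ?nnegrE ?mulr_ge0 // !exprMn.
have norm_sqr : \sum_(n < N) `|u n| ^+ 2 = \sum_(n < N) u n ^+ 2.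
  by apply: eq_bigr => n _; rewrite real_normK ?num_real.
have := sqr_sum_le N (fun n => `|u n|); rewrite /= norm_sqr => cs.
apply: le_trans (_ : W ^+ 2 * (N%:R * (2 * B ^+ 2)) <= _).
  rewrite ler_wpM2l ?sqr_ge0 // (le_trans cs) // ler_wpM2l //.
have := ler_wpM2r (sqr_ge0 B) cost_le; lra.
Qed.

Lemma block_cost_sqr_le (k m : nat) : (0 < k)%N ->
  (2 * m.+1 * block_cost (m %/ k) k ^ 2 <= (k * (m %/ k).+1 * (m %/ k).+2) ^ 2)%N.
Proof.
move=> k_gt0; rewrite /block_cost; set A := (m %/ k)%N.
have m_lt : (m.+1 <= k * A.+1)%N.
  have : (m %% k < k)%N by rewrite ltn_mod.
  by have := divn_eq m k; rewrite -/A; nia.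
case: eqP => [k1|/eqP k_neq1]; first by move: m_lt; rewrite k1; nia.
have k_ge2 : (2 <= k)%N by lia.
have sqr_le : ((2 * A + 1) ^ 2 <= A.+1 * A.+2 ^ 2)%N by nia.
apply: leq_trans (_ : 2 * (k * A.+1) * (A.+1 * A.+2 ^ 2) <= _)%N.
  by apply: leq_mul => //; apply: leq_mul.
rewrite (_ : (k * A.+1 * A.+2) ^ 2 = k * (k * A.+1) * (A.+1 * A.+2 ^ 2))%N; last by ring.
by rewrite leq_mul2r leq_mul2r k_ge2 !orbT.
Qed.

Section MainBound.
Variable R : realType.
Variable T : nat -> {poly R}.
Hypothesis hT : is_chebyshev_family T.

(* Sample [Q] at the [N] Chebyshev nodes, where the [T_p] with [p < N] are orthogonal. *)
Lemma sum_coef_sqr_le_supnorm11 N (Q : {poly R}) (c : nat -> R) :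
  (forall x, Q.[x] = \sum_(p < N) c p * (T p).[x]) ->
  \sum_(p < N) c p ^+ 2 <= 2 * supnorm11 Q ^+ 2.
Proof.
move=> hQ; have [->|N_gt0] := posnP N; first by rewrite big_ord0 mulr_ge0 ?sqr_ge0.
have node_value i : \sum_(p < N) c p * cos (p%:R * cheb_node R N i) = Q.[cos (cheb_node R N i)].
  by rewrite hQ; apply: eq_bigr => p _; rewrite hT.
have node_bound : \sum_(i < N) (\sum_(p < N) c p * cos (p%:R * cheb_node R N i)) ^+ 2
                  <= N%:R * supnorm11 Q ^+ 2.
  apply: le_trans (_ : _ <= \sum_(i < N) supnorm11 Q ^+ 2) _.
    2: by rewrite sumr_const card_ord mulr_natl.
  apply: ler_sum => i _; rewrite node_value -real_normK ?num_real //.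
  by rewrite ler_sqr ?nnegrE ?supnorm11_ge0 // supnorm11_ub // cos_geN1 cos_le1.
have := le_trans (sum_sqr_le_cheb_nodes N c) node_bound.
have : 0 < N%:R :> R by rewrite ltr0n.
set S := \sum_(p < N) _; set Z := supnorm11 Q ^+ 2; nra.
Qed.

Lemma even_poly_has_rep (k m : nat) (Q : {poly R}) : (0 < k)%N ->
  is_even_polyn Q -> (size Q <= (2 * m).+1)%N ->
  has_rep T (m %/ k) k (fun x => Q.[x])
    ((3 * k * (m %/ k).+1 * (m %/ k).+2)%:R * silver R ^+ (2 * k) * supnorm11 Q).
Proof.
move=> k_gt0 hQe hQd; set A := (m %/ k)%N; set W : R := (block_cost A k)%:R.
have [c hc] := chebyshev_expansion hT hQd.
have hQ x : Q.[x] = \sum_(p < (2 * m).+1) c p * (T p).[x].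
  by rewrite {1}hc horner_sum; apply: eq_bigr => p _; rewrite hornerZ.
have even_coef : \sum_(n < m.+1) c (2 * n)%N ^+ 2 <= 2 * supnorm11 Q ^+ 2.
  rewrite (le_trans _ (sum_coef_sqr_le_supnorm11 hQ)) //.
  rewrite -(sum_even_ord (fun p => c p ^+ 2)) ler_sum // => p _.
  by case: (odd p); rewrite ?sqr_ge0.
have rep : has_rep T A k (fun x => \sum_(n < m.+1) c (2 * n)%N * (T (2 * n)).[x])
                     (\sum_(n < m.+1) `|c (2 * n)%N| * (3 * silver R ^+ (2 * k) * W)).
  apply: (has_rep_sum (F := fun n x => c (2 * n)%N * (T (2 * n)).[x])
                      (r := fun n => `|c (2 * n)%N| * _)) => n hn.
  by apply/has_repZ/has_rep_chebyshev_even/leq_div2r.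
apply: has_rep_weaken rep (horner_even_chebyshev_expansion hT hQe hQ) _.
set K := (k * A.+1 * A.+2)%N; set S := \sum_(n < m.+1) `|c (2 * n)%N|.
have cost : 2 * (m.+1)%:R * W ^+ 2 <= K%:R ^+ 2.
  by have := block_cost_sqr_le m k_gt0; rewrite -(ler_nat R) !natrM /W /K !expr2.
have bound : W * S <= K%:R * supnorm11 Q.
  exact: (sum_norm_le_of_sum_sqr (u := fun n => c (2 * n)%N) (supnorm11_ge0 Q) (ler0n _ _)
            (ler0n _ K) even_coef cost).
have -> : \sum_(n < m.+1) `|c (2 * n)%N| * (3 * silver R ^+ (2 * k) * W)
          = 3 * silver R ^+ (2 * k) * (W * S) by rewrite /S -mulr_suml; ring.
have -> : (3 * k * A.+1 * A.+2)%:R * silver R ^+ (2 * k) * supnorm11 Q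
          = 3 * silver R ^+ (2 * k) * (K%:R * supnorm11 Q) by rewrite /K !natrM; ring.
by rewrite ler_wpM2l // mulr_ge0 ?exprn_ge0 ?(le_trans ler01 (silver_ge1 R)).
Qed.

End MainBound.

Unset Implicit Arguments.

Theorem mainTheorem8 (R : realType) (T : nat -> {poly R})
  (hT : is_chebyshev_family T) (k m : nat) (hk : (1 <= k)%N)
  (Q : {poly R}) (hQe : is_even_polyn Q) (hQd : (size Q <= (2 * m).+1)%N) :
  let A := (m %/ k)%N in
  (exists C : 'I_A.+1 -> 'I_k -> 'I_k.+1 -> 'I_2 -> R,
     (forall x : R,
        Q.[x] = \sum_(a < A.+1) \sum_(b < k) \sum_(j < k.+1) \sum_(l < 2)
                  C a b j l * (T a).[x] ^+ (2 * j) * (T b).[x] ^+ (2 * l)) /\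
     \sum_(a < A.+1) \sum_(b < k) \sum_(j < k.+1) \sum_(l < 2) `|C a b j l|
       <= (3 * k * A.+1 * A.+2)%:R * (1 + Num.sqrt 2) ^+ (2 * k) * supnorm11 Q)
  /\
  (forall (a : 'I_A.+1) (b : 'I_k) (j : 'I_k.+1) (l : 'I_2),
     exists Rs : 'I_k -> {poly R},
       (forall x : R, (T a).[x] ^+ (2 * j) * (T b).[x] ^+ (2 * l)
                      = \prod_(s < k) `|(Rs s).[x]| ^+ 2) /\
       (forall s : 'I_k,
          Rs s \in [:: 1; T a; T b; T a * T b] /\
          (is_even_polyn (Rs s) \/ is_odd_polyn (Rs s)) /\
          (size (Rs s) <= A + k)%N /\
          supnorm11 (Rs s) <= 1)).
Proof.
move=> A; split; first exact: even_poly_has_rep.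
by move=> a b j l; apply: (chebyshev_power_factorization hT) => //; rewrite -ltnS.
Qed.
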